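(* Let $(A,\mathcal H)$ be a left Hopf algebroid such that ${}_s\mathcal H$ is $A$-flat. Let $B$ be a right $\mathcal H$-comodule $A^o$-subring of $\mathcal H$ via $t$, with inclusion $\iota$, such that for every $b\in B$, $\beta^{-1}(\iota(b)\otimes_A1)=\sum_i\iota(b_i)\otimes_{A^o}h_i$ for some $\sum_ib_i\otimes_{A^o}h_i\in B\otimes_{A^o}\mathcal H$. Then the map $\mathcal H\otimes_B\mathcal H\to(\mathcal H/\mathcal HB^+)\otimes_A\mathcal H$, $x\otimes_By\mapsto\sum\pi(x_1)\otimes_Ax_2y$ (with $\pi:\mathcal H\to\mathcal H/\mathcal HB^+$ the projection) is well-defined and is an isomorphism.
   Context: $\Bbbk$ is a field. A left bialgebroid $(A,\mathcal H)$: $\Bbbk$-algebras $A,\mathcal H$, algebra maps $s:A\to\mathcal H$, $t:A^o\to\mathcal H$ with commuting images, $A$-bilinear $\Delta:\mathcal H\to\mathcal H\otimes_A\mathcal H$, $\varepsilon:\mathcal H\to A$ (bimodule structure $a\cdot h\cdot b=s(a)t(b)h$; $\mathcal H\otimes_A\mathcal H$ = quotient of $\mathcal H\otimes\mathcal H$ by span of $t(a)x\otimes y-x\otimes s(a)y$), with $(\mathcal H,\Delta,\varepsilon)$ a coassociative counital $A$-coring, $\Delta$ an algebra map into the Takeuchi product $\{\sum x_i\otimes_Ay_i:\sum x_it(a)\otimes_Ay_i=\sum x_i\otimes_Ay_is(a)\ \forall a\}$, $\varepsilon(xs(\varepsilon(y)))=\varepsilon(xy)=\varepsilon(xt(\varepsilon(y)))$,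 $\varepsilon(1)=1$; $\Delta(x)=\sum x_1\otimes_Ax_2$, $\mathcal H^+=\ker\varepsilon$, $B^+=B\cap\mathcal H^+$. Left Hopf algebroid: $\beta:\mathcal H\otimes_{A^o}\mathcal H\to\mathcal H\otimes_A\mathcal H$, $x\otimes_{A^o}y\mapsto\sum x_1\otimes_Ax_2y$ is bijective, where $\mathcal H\otimes_{A^o}\mathcal H$ is the quotient of $\mathcal H\otimes\mathcal H$ by the span of $xt(a)\otimes y-x\otimes t(a)y$. ''${}_s\mathcal H$ is $A$-flat'': flat as left $A$-module via $s$. In $(\mathcal H/\mathcal HB^+)\otimes_A\mathcal H$ the left factor is a right $A$-module via $t$ and $\mathcal H$ a left $A$-module via $s$; $\mathcal H\otimes_B\mathcal H$ uses the regular right and left $B$-actions. Right $\mathcal H$-comodule $A^o$-subring via $t$: subalgebra $B\supseteq t(A)$ with a coassociative counital right $A$-linear coaction $\delta:B\to B\otimes_A\mathcal H$ ($b\cdot a=t(a)b$; $\mathcal H$ left via $s$) such that $(\iota\otimes_A\mathcal H)\delta=\Delta\iota$. *)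

(* Hopf algebroids over a field k, with balanced tensor
   products encoded by formal finite sums and their universal property. *)
From HB Require Import structures.
From mathcomp Require Import all_boot all_order all_algebra.
Set Implicit Arguments. Unset Strict Implicit. Unset Printing Implicit Defensive.
Import GRing.Theory.
Local Open Scope ring_scope.

Section Tensors.
Variable k : fieldType.

Definition bilinear_on (M N V : lmodType k) (D : pred M) (f : M -> N -> V) : Prop :=
  (forall (c : k) (x x' : M) (y : N), D x -> D x' ->
      f (c *: x + x') y = c *: f x y + f x' y) /\
  (forall (c : k) (x : M) (y y' : N), D x ->
      f x (c *: y + y') = c *: f x y + f x y').

(** Equality in a balanced tensor product (D ⊗ N modulo the balancing
    relations [bal]): two formal sums [u], [v] of elementary tensors are
    equal iff every k-bilinear balanced map takes the same value on them. *)
Definition tens_eq (M N : lmodType k) (D : pred M)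
    (bal : forall V : lmodType k, (M -> N -> V) -> Prop) (u v : seq (M * N)) : Prop :=
  forall (V : lmodType k) (f : M -> N -> V), bilinear_on D f -> bal V f ->
    \sum_(p <- u) f p.1 p.2 = \sum_(p <- v) f p.1 p.2.

Definition trilinear_on (M V : lmodType k) (D : pred M) (f : M -> M -> M -> V) : Prop :=
  (forall (c : k) (x x' y z : M), D x -> D x' ->
      f (c *: x + x') y z = c *: f x y z + f x' y z) /\
  (forall (c : k) (x y y' z : M), D x ->
      f x (c *: y + y') z = c *: f x y z + f x y' z) /\
  (forall (c : k) (x y z z' : M), D x ->
      f x y (c *: z + z') = c *: f x y z + f x y z').

Definition tens3_eq (M : lmodType k) (D : pred M)
    (bal : forall V : lmodType k, (M -> M -> M -> V) -> Prop)
    (u v : seq (M * M * M)) : Prop :=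
  forall (V : lmodType k) (f : M -> M -> M -> V), trilinear_on D f -> bal V f ->
    \sum_(p <- u) f p.1.1 p.1.2 p.2 = \sum_(p <- v) f p.1.1 p.1.2 p.2.

End Tensors.

Section Algebroid.
Variables (k : fieldType) (A H : algType k) (s t : A -> H)
  (Delta : H -> seq (H * H)) (eps : H -> A).

(** H ⊗_A H : relation  t(a)x ⊗ y = x ⊗ s(a)y *)
Definition bal_A (V : lmodType k) (f : H -> H -> V) : Prop :=
  forall (a : A) (x y : H), f (t a * x) y = f x (s a * y).
Definition teqA := tens_eq (@predT H) bal_A.

(** H ⊗_{A^o} H : relation  x t(a) ⊗ y = x ⊗ t(a)y *)
Definition bal_Ao (V : lmodType k) (f : H -> H -> V) : Prop :=
  forall (a : A) (x y : H), f (x * t a) y = f x (t a * y).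
Definition teqAo := tens_eq (@predT H) bal_Ao.

Definition bal_A3 (B : pred H) (V : lmodType k) (f : H -> H -> H -> V) : Prop :=
  (forall (a : A) (x y z : H), B x -> f (t a * x) y z = f x (s a * y) z) /\
  (forall (a : A) (x y z : H), B x -> f x (t a * y) z = f x y (s a * z)).
Definition teqA3 := tens3_eq (@predT H) (bal_A3 predT).

Definition tscale (c : k) (u : seq (H * H)) := [seq (c *: p.1, p.2) | p <- u].
Definition lift_left (D : H -> seq (H * H)) (u : seq (H * H)) : seq (H * H * H) :=
  flatten [seq [seq (q.1, q.2, p.2) | q <- D p.1] | p <- u].
Definition lift_right (u : seq (H * H)) : seq (H * H * H) :=
  flatten [seq [seq (p.1, q.1, q.2) | q <- Delta p.2] | p <- u].

(** the Galois-type map  x ⊗ y |-> Σ x_1 ⊗ x_2 y  on formal sums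
    (used both for β and for the map of the lemma) *)
Definition galois_map (u : seq (H * H)) : seq (H * H) :=
  flatten [seq [seq (q.1, q.2 * p.2) | q <- Delta p.1] | p <- u].

Definition is_left_bialgebroid : Prop :=
  (forall (c : k) (a b : A), s (c *: a + b) = c *: s a + s b) /\
  (forall a b : A, s (a * b) = s a * s b) /\ s 1 = 1 /\
  (forall (c : k) (a b : A), t (c *: a + b) = c *: t a + t b) /\
  (forall a b : A, t (a * b) = t b * t a) /\ t 1 = 1 /\
  (forall a b : A, s a * t b = t b * s a) /\
  (forall (c : k) (x y : H), teqA (Delta (c *: x + y)) (tscale c (Delta x) ++ Delta y)) /\
  (forall (a b : A) (h : H),
      teqA (Delta (s a * t b * h)) [seq (s a * p.1, t b * p.2) | p <- Delta h]) /\
  (forall (c : k) (x y : H), eps (c *: x + y) = c *: eps x + eps y) /\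
  (forall (a b : A) (h : H), eps (s a * t b * h) = a * eps h * b) /\
  (forall x : H, teqA3 (lift_left Delta (Delta x)) (lift_right (Delta x))) /\
  (forall x : H, \sum_(p <- Delta x) s (eps p.1) * p.2 = x) /\
  (forall x : H, \sum_(p <- Delta x) t (eps p.2) * p.1 = x) /\
  (* Delta lands in the Takeuchi product *)
  (forall (a : A) (x : H),
      teqA [seq (p.1 * t a, p.2) | p <- Delta x] [seq (p.1, p.2 * s a) | p <- Delta x]) /\
  (forall x y : H,
      teqA (Delta (x * y)) [seq (p.1 * q.1, p.2 * q.2) | p <- Delta x, q <- Delta y]) /\
  teqA (Delta 1) [:: (1, 1)] /\
  (forall x y : H, eps (x * s (eps y)) = eps (x * y)) /\
  (forall x y : H, eps (x * y) = eps (x * t (eps y))) /\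
  eps 1 = 1.

(** left Hopf algebroid: β : H ⊗_{A^o} H -> H ⊗_A H is (well defined and)
    bijective *)
Definition is_left_Hopf_algebroid : Prop :=
  is_left_bialgebroid /\
  (forall u v : seq (H * H), teqAo u v <-> teqA (galois_map u) (galois_map v)) /\
  (forall w : seq (H * H), exists u, teqA (galois_map u) w).

Definition right_Amod (M : lmodType k) (act : M -> A -> M) : Prop :=
  (forall m : M, act m 1 = m) /\
  (forall (m : M) (a b : A), act (act m a) b = act m (a * b)) /\
  (forall (c : k) (m m' : M) (a : A), act (c *: m + m') a = c *: act m a + act m' a) /\
  (forall (c : k) (m : M) (a a' : A), act m (c *: a + a') = c *: act m a + act m a').

Definition bal_mod (M : lmodType k) (act : M -> A -> M)
    (V : lmodType k) (f : M -> H -> V) : Prop :=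
  forall (a : A) (m : M) (y : H), f (act m a) y = f m (s a * y).

(** _sH is flat: - ⊗_A H preserves injective maps of right A-modules *)
Definition s_flat : Prop :=
  forall (M M' : lmodType k) (act : M -> A -> M) (act' : M' -> A -> M') (g : M -> M'),
    right_Amod act -> right_Amod act' ->
    (forall (c : k) (m m' : M), g (c *: m + m') = c *: g m + g m') ->
    (forall (m : M) (a : A), g (act m a) = act' (g m) a) ->
    injective g ->
    forall u v : seq (M * H),
      tens_eq predT (bal_mod act') [seq (g p.1, p.2) | p <- u] [seq (g p.1, p.2) | p <- v] ->
      tens_eq predT (bal_mod act) u v.

(** B ⊗_A H  (B a right A-module via t, H a left A-module via s) *)
Definition bal_BA (B : {pred H}) (V : lmodType k) (f : H -> H -> V) : Prop :=
  forall (a : A) (x y : H), x \in B -> f (t a * x) y = f x (s a * y).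
Definition teqBA (B : {pred H}) := tens_eq (fun x => x \in B) (bal_BA B).
Definition teqBA3 (B : {pred H}) :=
  tens3_eq (fun x => x \in B) (bal_A3 (fun x => x \in B)).

Definition is_comodule_subring (B : {pred H}) (delta : H -> seq (H * H)) : Prop :=
  (forall (c : k) (x y : H), x \in B -> y \in B -> c *: x + y \in B) /\
  (forall x y : H, x \in B -> y \in B -> x * y \in B) /\
  (forall a : A, t a \in B) /\
  (forall b : H, b \in B -> all (fun p => p.1 \in B) (delta b)) /\
  (forall (c : k) (x y : H), x \in B -> y \in B ->
      teqBA B (delta (c *: x + y)) (tscale c (delta x) ++ delta y)) /\
  (forall (a : A) (b : H), b \in B ->
      teqBA B (delta (t a * b)) [seq (p.1, t a * p.2) | p <- delta b]) /\
  (forall b : H, b \in B -> teqBA3 B (lift_left delta (delta b)) (lift_right (delta b))) /\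
  (forall b : H, b \in B -> \sum_(p <- delta b) t (eps p.2) * p.1 = b) /\
  (forall b : H, b \in B -> teqA (delta b) (Delta b)).

(** (H / H B^+) ⊗_A H : bilinear maps on H × H killing H B^+ in the first
    argument and balanced by  π(t(a)x) ⊗ y = π(x) ⊗ s(a)y *)
Definition bal_Q (B : {pred H}) (V : lmodType k) (f : H -> H -> V) : Prop :=
  bal_A f /\ (forall (h b y : H), b \in B -> eps b = 0 -> f (h * b) y = 0).
Definition teqQ (B : {pred H}) := tens_eq (@predT H) (bal_Q B).

Definition bal_B (B : {pred H}) (V : lmodType k) (f : H -> H -> V) : Prop :=
  forall (b x y : H), b \in B -> f (x * b) y = f x (b * y).
Definition teqB (B : {pred H}) := tens_eq (@predT H) (bal_B B).

End Algebroid.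

From HB Require Import structures.
From mathcomp Require Import all_boot all_order all_algebra.
From Stdlib Require Import ClassicalEpsilon.
Set Implicit Arguments. Unset Strict Implicit. Unset Printing Implicit Defensive.
Import GRing.Theory.
Local Open Scope ring_scope.

(* Tensor products are handled through their universal property, so the map
   x ⊗_B y |-> Σ π(x_1) ⊗_A x_2 y is dual to pulling a map f on
   (H/HB^+) ⊗_A H back along β, i.e. to (x, y) |-> Σ f(x_1, x_2 y).
   This pullback is B-balanced: Δ is multiplicative, δ(b) ∈ B ⊗_A H represents
   Δ(b), and f sees any b' ∈ B only through t(ε b'), so
   Σ f(x_1 b_1, x_2 b_2 y) = f(x_1, x_2 Σ s(ε b_1) b_2 y) = f(x_1, x_2 b y).
   Conversely a B-balanced f is A^o-balanced (t(A) ⊆ B), hence F := f ∘ β^{-1}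
   is defined on H ⊗_A H, and F kills HB^+ ⊗ H because
   β^{-1}(hb ⊗ z) = h_+ b_+ ⊗ b_- h_- z with b_+ ∈ B and b_+ b_- = s(ε b).
   Surjectivity is inherited from β. *)

Lemma bilinear_onT (k : fieldType) (M N V : lmodType k) (f : M -> N -> V) :
  (forall c x x' y, f (c *: x + x') y = c *: f x y + f x' y) ->
  (forall c x y y', f x (c *: y + y') = c *: f x y + f x y') ->
  bilinear_on predT f.
Proof. by move=> fl fr; split=> *; [apply: fl | apply: fr]. Qed.

Section BilinearOn.
Variables (k : fieldType) (M N V : lmodType k) (f : M -> N -> V).
Hypothesis f_bil : bilinear_on predT f.

Lemma bilinear0l y : f 0 y = 0.
Proof.
have := f_bil.1 1 0 0 y isT isT; rewrite !scale1r addr0 => e.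
by apply: (addrI (f 0 y)); rewrite addr0 -e.
Qed.

Lemma bilinear0r x : f x 0 = 0.
Proof.
have := f_bil.2 1 x 0 0 isT; rewrite !scale1r addr0 => e.
by apply: (addrI (f x 0)); rewrite addr0 -e.
Qed.

Lemma bilinearDl x x' y : f (x + x') y = f x y + f x' y.
Proof. by have := f_bil.1 1 x x' y isT isT; rewrite !scale1r. Qed.

Lemma bilinearZl c x y : f (c *: x) y = c *: f x y.
Proof. by have := f_bil.1 c x 0 y isT isT; rewrite !addr0 bilinear0l addr0. Qed.

Lemma bilinearDr x y y' : f x (y + y') = f x y + f x y'.
Proof. by have := f_bil.2 1 x y y' isT; rewrite !scale1r. Qed.

Lemma bilinearZr c x y : f x (c *: y) = c *: f x y.
Proof. by have := f_bil.2 c x y 0 isT; rewrite !addr0 bilinear0r addr0. Qed.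

Lemma bilinear_sumr (I : Type) (r : seq I) x (F : I -> N) :
  f x (\sum_(i <- r) F i) = \sum_(i <- r) f x (F i).
Proof.
elim: r => [|i r IH]; first by rewrite !big_nil bilinear0r.
by rewrite !big_cons bilinearDr IH.
Qed.

End BilinearOn.

Lemma bilinear_mulr (k : fieldType) (H : algType k) (V : lmodType k)
    (f : H -> H -> V) (m n : H) :
  bilinear_on predT f -> bilinear_on predT (fun x y => f (x * m) (y * n)).
Proof.
move=> f_bil; apply: bilinear_onT => c x x' y /=; rewrite mulrDl -scalerAl.
  exact: f_bil.1.
exact: f_bil.2.
Qed.

Section LeftBialgebroid.
Variables (k : fieldType) (A H : algType k) (s t : A -> H)
  (Delta : H -> seq (H * H)) (eps : H -> A).

Hypothesis s_linear : forall (c : k) (a b : A), s (c *: a + b) = c *: s a + s b.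
Hypothesis sM : forall a b : A, s (a * b) = s a * s b.
Hypothesis s1 : s 1 = 1.
Hypothesis eps_linear : forall (c : k) (x y : H), eps (c *: x + y) = c *: eps x + eps y.
Hypothesis eps_st : forall (a b : A) (h : H), eps (s a * t b * h) = a * eps h * b.
Hypothesis eps1 : eps 1 = 1.
Hypothesis Delta_counit : forall x : H, \sum_(p <- Delta x) s (eps p.1) * p.2 = x.
Hypothesis Delta_Takeuchi : forall (a : A) (x : H),
  teqA s t [seq (p.1 * t a, p.2) | p <- Delta x] [seq (p.1, p.2 * s a) | p <- Delta x].
Hypothesis Delta_linear : forall (c : k) (x y : H),
  teqA s t (Delta (c *: x + y)) (tscale c (Delta x) ++ Delta y).
Hypothesis DeltaM : forall x y : H,
  teqA s t (Delta (x * y)) [seq (p.1 * q.1, p.2 * q.2) | p <- Delta x, q <- Delta y].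

Lemma s0 : s 0 = 0.
Proof.
have := s_linear 1 0 0; rewrite !scale1r addr0 => e.
by apply: (addrI (s 0)); rewrite addr0 -e.
Qed.

Lemma eps_t a : eps (t a) = a.
Proof. by have := eps_st 1 a 1; rewrite s1 !mul1r mulr1 eps1 mul1r. Qed.

Lemma bal_A_mulr (V : lmodType k) (f : H -> H -> V) m n :
  bal_A s t f -> bal_A s t (fun x y => f (x * m) (y * n)).
Proof. by move=> f_bal a x y /=; rewrite -!mulrA f_bal. Qed.

Lemma seps_bilinear : bilinear_on predT (fun x y : H => s (eps x) * y).
Proof.
apply: bilinear_onT => c x x' y /=; last by rewrite mulrDr scalerAr.
by rewrite eps_linear s_linear mulrDl scalerAl.
Qed.

Lemma seps_balanced : bal_A s t (fun x y : H => s (eps x) * y).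
Proof.
move=> a x y /=; have -> : t a * x = s 1 * t a * x by rewrite s1 mul1r.
by rewrite eps_st mul1r sM mulrA.
Qed.

(* [Delta_lmul f x m n] is [f] evaluated at [Delta x * (m ⊗ n)]; the Takeuchi
   property makes this well defined on [H ⊗_A H]. *)
Definition Delta_lmul (V : lmodType k) (f : H -> H -> V) (x m n : H) : V :=
  \sum_(a <- Delta x) f (a.1 * m) (a.2 * n).

Lemma sum_galois_map (V : lmodType k) (f : H -> H -> V) u :
  \sum_(p <- galois_map Delta u) f p.1 p.2 = \sum_(p <- u) Delta_lmul f p.1 1 p.2.
Proof.
rewrite /galois_map big_flatten big_map; apply: eq_bigr => p _.
by rewrite big_map; apply: eq_bigr => a _; rewrite mulr1.
Qed.

Lemma Delta_lmul_seps x n : Delta_lmul (fun x y => s (eps x) * y) x 1 n = x * n.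
Proof.
rewrite -{2}[x]Delta_counit mulr_suml; apply: eq_bigr => a _.
by rewrite mulr1 mulrA.
Qed.

Section BalancedMap.
Variables (V : lmodType k) (f : H -> H -> V).
Hypotheses (f_bil : bilinear_on predT f) (f_bal : bal_A s t f).

Lemma Delta_lmul_bilinear x : bilinear_on predT (Delta_lmul f x).
Proof.
apply: bilinear_onT => c m m' n; rewrite /Delta_lmul scaler_sumr -big_split;
  apply: eq_bigr => a _ /=.
  by rewrite mulrDr -scalerAr (f_bil.1 _ _ _ _ isT isT).
by rewrite mulrDr -scalerAr (f_bil.2 _ _ _ _ isT).
Qed.

Lemma Delta_lmul_balanced x : bal_A s t (Delta_lmul f x).
Proof.
move=> a m n; rewrite /Delta_lmul.
have := Delta_Takeuchi a x (bilinear_mulr m n f_bil) (bal_A_mulr m n f_bal).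
rewrite !big_map /= => e.
under eq_bigr do rewrite mulrA; rewrite e.
by apply: eq_bigr => b _; rewrite mulrA.
Qed.

Lemma Delta_lmul_linear c x x' m n :
  Delta_lmul f (c *: x + x') m n = c *: Delta_lmul f x m n + Delta_lmul f x' m n.
Proof.
rewrite /Delta_lmul (Delta_linear c x x' (bilinear_mulr m n f_bil) (bal_A_mulr m n f_bal)).
rewrite big_cat big_map scaler_sumr /=; congr (_ + _); apply: eq_bigr => a _ /=.
by rewrite -scalerAl bilinearZl.
Qed.

Lemma Delta_lmulM x y m n :
  Delta_lmul f (x * y) m n = Delta_lmul (Delta_lmul f x) y m n.
Proof.
rewrite /Delta_lmul (DeltaM x y (bilinear_mulr m n f_bil) (bal_A_mulr m n f_bal)).
rewrite big_allpairs_dep /= exchange_big /=; apply: eq_bigr => b _.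
by apply: eq_bigr => a _; rewrite !mulrA.
Qed.

End BalancedMap.

Definition galois_pullback (V : lmodType k) (f : H -> H -> V) (x y : H) : V :=
  Delta_lmul f x 1 y.

Lemma galois_pullback_bilinear (V : lmodType k) (f : H -> H -> V) :
  bilinear_on predT f -> bal_A s t f -> bilinear_on predT (galois_pullback f).
Proof.
move=> f_bil f_bal; apply: bilinear_onT => c x x' y; rewrite /galois_pullback.
  exact: Delta_lmul_linear.
exact: (Delta_lmul_bilinear f_bil _).2 _ _ _ _ isT.
Qed.

Definition beta_preimage (w : seq (H * H)) (x y : H) : Prop :=
  teqA s t (galois_map Delta w) [:: (x, y)].

Lemma beta_preimage_sum (V : lmodType k) (f : H -> H -> V) w x y m n :
  bilinear_on predT f -> bal_A s t f -> beta_preimage w x y ->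
  \sum_(p <- w) Delta_lmul f p.1 m (p.2 * n) = f (x * m) (y * n).
Proof.
move=> f_bil f_bal hw.
have := hw _ _ (bilinear_mulr m n f_bil) (bal_A_mulr m n f_bal).
rewrite (sum_galois_map (fun a b => f (a * m) (b * n))) big_seq1 /= => <-.
apply: eq_bigr => p _.
by apply: eq_bigr => a _; rewrite mulr1 mulrA.
Qed.

Lemma beta_preimage_mulr w x y z :
  beta_preimage w x y -> beta_preimage [seq (p.1, p.2 * z) | p <- w] x (y * z).
Proof.
move=> hw V f f_bil f_bal; rewrite sum_galois_map big_map big_seq1 /=.
by rewrite (beta_preimage_sum _ _ f_bil f_bal hw) mulr1.
Qed.

Lemma beta_preimage_add c w w' x x' y :
  beta_preimage w x y -> beta_preimage w' x' y ->
  beta_preimage ([seq (p.1, c *: p.2) | p <- w] ++ w') (c *: x + x') y.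
Proof.
move=> hw hw' V f f_bil f_bal.
rewrite big_seq1 /= (f_bil.1 _ _ _ _ isT isT).
have := hw _ _ f_bil f_bal; have := hw' _ _ f_bil f_bal.
rewrite !big_seq1 !sum_galois_map /= => <- <-.
rewrite big_cat big_map scaler_sumr; congr (_ + _); apply: eq_bigr => p _.
exact: bilinearZr (Delta_lmul_bilinear f_bil _) _ _ _.
Qed.

Lemma beta_preimage_mul w w' x x' :
  beta_preimage w x 1 -> beta_preimage w' x' 1 ->
  beta_preimage [seq (p.1 * q.1, q.2 * p.2) | p <- w, q <- w'] (x * x') 1.
Proof.
move=> hw hw' V f f_bil f_bal.
rewrite sum_galois_map big_allpairs_dep big_seq1 /=.
transitivity (f (x * x') (1 * 1)); last by rewrite mulr1.
rewrite -(beta_preimage_sum _ _ f_bil f_bal hw); apply: eq_bigr => p _.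
under eq_bigr do rewrite (Delta_lmulM f_bil f_bal).
rewrite (beta_preimage_sum _ _ (Delta_lmul_bilinear f_bil _)
  (Delta_lmul_balanced f_bil f_bal _) hw').
by rewrite !mulr1 mul1r.
Qed.

Lemma beta_preimage_counit w x :
  beta_preimage w x 1 -> \sum_(p <- w) p.1 * p.2 = s (eps x).
Proof.
move=> hw; have := beta_preimage_sum 1 1 seps_bilinear seps_balanced hw.
rewrite !mulr1 => <-; apply: eq_bigr => p _.
by rewrite mulr1 Delta_lmul_seps.
Qed.

Section Subring.
Variable B : {pred H}.
Hypothesis B_linear : forall (c : k) (x y : H), x \in B -> y \in B -> c *: x + y \in B.
Hypothesis tB : forall a : A, t a \in B.

Lemma Qbalanced_B (V : lmodType k) (f : H -> H -> V) b y :
  bilinear_on predT f -> bal_Q s t eps B f -> b \in B ->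
  f b y = f 1 (s (eps b) * y).
Proof.
move=> f_bil [f_bal f_kill] bB.
have bplusB : b - t (eps b) \in B by rewrite -scaleN1r addrC; apply: B_linear.
have eps_bplus : eps (b - t (eps b)) = 0.
  by rewrite addrC -scaleN1r eps_linear eps_t scaleN1r addNr.
rewrite -{1}(subrK (t (eps b)) b) (bilinearDl f_bil) -[b - _]mul1r f_kill //.
by rewrite add0r -[t _]mulr1 f_bal.
Qed.

Lemma Delta_lmul_Qbalanced (V : lmodType k) (f : H -> H -> V) x :
  bilinear_on predT f -> bal_Q s t eps B f -> bal_Q s t eps B (Delta_lmul f x).
Proof.
move=> f_bil [f_bal f_kill]; split; first exact: Delta_lmul_balanced.
move=> h b y bB eb; rewrite /Delta_lmul big1 // => a _.
by rewrite mulrA f_kill.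
Qed.

Section Coaction.
Variable delta : H -> seq (H * H).
Hypothesis delta_B : forall b : H, b \in B -> all (fun p => p.1 \in B) (delta b).
Hypothesis delta_Delta : forall b : H, b \in B -> teqA s t (delta b) (Delta b).

Lemma sum_delta_Qbalanced (V : lmodType k) (f : H -> H -> V) b y :
  bilinear_on predT f -> bal_Q s t eps B f -> b \in B ->
  \sum_(p <- delta b) f p.1 (p.2 * y) = f 1 (b * y).
Proof.
move=> f_bil f_Q bB.
rewrite (eq_big_seq (fun p => f 1 (s (eps p.1) * p.2 * y))); last first.
  move=> p pb; rewrite -mulrA; apply: Qbalanced_B => //.
  exact: (allP (delta_B bB)).
rewrite -(bilinear_sumr f_bil) -mulr_suml.
have := delta_Delta bB seps_bilinear seps_balanced.
by rewrite /= Delta_counit => ->.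
Qed.

Lemma galois_pullback_Bbalanced (V : lmodType k) (f : H -> H -> V) :
  bilinear_on predT f -> bal_Q s t eps B f -> bal_B B (galois_pullback f).
Proof.
move=> f_bil f_Q b x y bB; have [f_bal _] := f_Q.
have G_bil := Delta_lmul_bilinear f_bil x.
have G_bal := Delta_lmul_balanced f_bil f_bal x.
rewrite /galois_pullback (Delta_lmulM f_bil f_bal) {1}/Delta_lmul.
have := delta_Delta bB (bilinear_mulr 1 y G_bil) (bal_A_mulr 1 y G_bal).
rewrite /= => <-; under eq_bigr do rewrite mulr1.
exact: sum_delta_Qbalanced G_bil (Delta_lmul_Qbalanced x f_bil f_Q) bB.
Qed.

Lemma teqB_galois_teqQ u v :
  teqB B u v -> teqQ s t eps B (galois_map Delta u) (galois_map Delta v).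
Proof.
move=> huv V f f_bil f_Q; rewrite !sum_galois_map.
exact: huv _ (galois_pullback f) (galois_pullback_bilinear f_bil f_Q.1)
  (galois_pullback_Bbalanced f_bil f_Q).
Qed.

End Coaction.

Section GaloisInverse.
Hypothesis galois_inj : forall u v : seq (H * H),
  teqA s t (galois_map Delta u) (galois_map Delta v) -> teqAo t u v.
Hypothesis galois_surj : forall w : seq (H * H),
  exists u, teqA s t (galois_map Delta u) w.
Hypothesis B_beta_preimage : forall b : H, b \in B ->
  exists u, all (fun p => p.1 \in B) u /\ beta_preimage u b 1.

Definition beta_inv (x y : H) : seq (H * H) :=
  proj1_sig (constructive_indefinite_description _ (galois_surj [:: (x, y)])).

Lemma beta_invP x y : beta_preimage (beta_inv x y) x y.
Proof.
exact: proj2_sig (constructive_indefinite_description _ (galois_surj [:: (x, y)])).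
Qed.

Section Transpose.
Variables (V : lmodType k) (f : H -> H -> V).
Hypotheses (f_bil : bilinear_on predT f) (f_balB : bal_B B f).

Lemma galois_inj_sum u v :
  teqA s t (galois_map Delta u) (galois_map Delta v) ->
  \sum_(p <- u) f p.1 p.2 = \sum_(p <- v) f p.1 p.2.
Proof. by move=> huv; apply: (galois_inj huv f_bil) => a x y; apply: f_balB. Qed.

Definition beta_transpose (x y : H) : V := \sum_(p <- beta_inv x y) f p.1 p.2.

Lemma beta_transposeE w x y :
  beta_preimage w x y -> beta_transpose x y = \sum_(p <- w) f p.1 p.2.
Proof.
move=> hw; apply: galois_inj_sum => V' g g_bil g_bal.
by rewrite (hw _ _ g_bil g_bal) (beta_invP x y g_bil g_bal).
Qed.

Lemma beta_transpose_mulr x y :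
  beta_transpose x y = \sum_(p <- beta_inv x 1) f p.1 (p.2 * y).
Proof.
have := beta_preimage_mulr y (beta_invP x 1).
by rewrite mul1r => /beta_transposeE ->; rewrite big_map.
Qed.

Lemma beta_transpose_bilinear : bilinear_on predT beta_transpose.
Proof.
apply: bilinear_onT => c x x' y.
  rewrite (beta_transposeE (beta_preimage_add c (beta_invP x y) (beta_invP x' y))).
  rewrite big_cat big_map scaler_sumr; congr (_ + _); apply: eq_bigr => p _.
  exact: bilinearZr.
rewrite !beta_transpose_mulr scaler_sumr -big_split; apply: eq_bigr => p _ /=.
by rewrite mulrDr -scalerAr (f_bil.2 _ _ _ _ isT).
Qed.

Lemma beta_transpose_balanced : bal_A s t beta_transpose.
Proof.
move=> a x y; apply: beta_transposeE => V' g g_bil g_bal.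
by rewrite (beta_invP x (s a * y) g_bil g_bal) !big_seq1 /= g_bal.
Qed.

Lemma beta_transpose_kill h b z :
  b \in B -> eps b = 0 -> beta_transpose (h * b) z = 0.
Proof.
move=> bB eb; have [w [wB hw]] := B_beta_preimage bB.
have := beta_preimage_mulr z (beta_preimage_mul (beta_invP h 1) hw).
rewrite mul1r => /beta_transposeE ->.
rewrite big_map big_allpairs_dep /= big1 // => p _.
transitivity (f p.1 ((\sum_(q <- w) q.1 * q.2) * (p.2 * z))).
  rewrite mulr_suml (bilinear_sumr f_bil); apply: eq_big_seq => q qw.
  by rewrite f_balB ?mulrA //; apply: (allP wB).
by rewrite (beta_preimage_counit hw) eb s0 mul0r (bilinear0r f_bil).
Qed.

Lemma beta_transpose_galois w :
  \sum_(p <- galois_map Delta w) beta_transpose p.1 p.2 = \sum_(p <- w) f p.1 p.2.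
Proof.
transitivity (\sum_(p <- flatten [seq beta_inv q.1 q.2 | q <- galois_map Delta w])
  f p.1 p.2); first by rewrite [RHS]big_flatten big_map.
apply: galois_inj_sum => V' g g_bil g_bal.
rewrite sum_galois_map big_flatten big_map; apply: eq_bigr => q _.
by rewrite -sum_galois_map (beta_invP q.1 q.2 g_bil g_bal) big_seq1.
Qed.

End Transpose.

Lemma teqQ_galois_teqB u v :
  teqQ s t eps B (galois_map Delta u) (galois_map Delta v) -> teqB B u v.
Proof.
move=> huv V f f_bil f_balB.
rewrite -(beta_transpose_galois f_bil f_balB u) -(beta_transpose_galois f_bil f_balB v).
apply: huv (beta_transpose_bilinear f_bil f_balB) _.
split; first exact: beta_transpose_balanced.
by move=> h b z bB eb; apply: beta_transpose_kill.
Qed.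

End GaloisInverse.

End Subring.

End LeftBialgebroid.

Theorem lemma2p12 (k : fieldType) (A H : algType k) (s t : A -> H)
    (Delta : H -> seq (H * H)) (eps : H -> A)
    (B : {pred H}) (delta : H -> seq (H * H)) :
  is_left_Hopf_algebroid s t Delta eps ->
  s_flat s ->
  is_comodule_subring s t Delta eps B delta ->
  (* beta^{-1}(iota(b) ⊗_A 1) lies in the image of B ⊗_{A^o} H *)
  (forall b : H, b \in B ->
     exists u : seq (H * H),
       all (fun p => p.1 \in B) u /\
       teqA s t (galois_map Delta u) [:: (b, 1)]) ->
  (* the map x ⊗_B y |-> Σ π(x_1) ⊗_A x_2 y is well defined ... *)
  (forall u v : seq (H * H),
     teqB B u v -> teqQ s t eps B (galois_map Delta u) (galois_map Delta v)) /\
  (* ... injective ... *)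
  (forall u v : seq (H * H),
     teqQ s t eps B (galois_map Delta u) (galois_map Delta v) -> teqB B u v) /\
  (* ... and surjective *)
  (forall w : seq (H * H), exists u : seq (H * H),
     teqQ s t eps B (galois_map Delta u) w).
Proof.
move=> [[s_linear [sM [s1 [_ [_ [_ [_ [Delta_linear [_ [eps_linear [eps_st [_
  [Delta_counit [_ [Delta_Takeuchi [DeltaM [_ [_ [_ eps1]]]]]]]]]]]]]]]]]]]
  [beta_bij beta_surj]] _ [B_linear [_ [tB [delta_B [_ [_ [_ [_ delta_Delta]]]]]]]]
  B_beta_preimage.
have beta_inj u v := (beta_bij u v).2.
split; first by move=> u v; apply: teqB_galois_teqQ; eassumption.
split; first by move=> u v; apply: teqQ_galois_teqB; eassumption.
move=> w; have [u hu] := beta_surj w.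
by exists u => V f f_bil [f_bal _]; apply: hu.
Qed.
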